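(* Let $G$ be a simple graph with adjacency matrix $A$. If $\mathrm{LCP}(A+I,-\mathbf{e})$ is w-unique, then $\mathbf{e}^\top x$ is constant over all solutions $x$ of $\mathrm{LCP}(A+I,-\mathbf{e})$, and consequently $G$ is well-covered.
   Context: $x$ solves $\mathrm{LCP}(M,q)$ if $x\geq 0$, $Mx+q\geq 0$ and $x^\top(Mx+q)=0$; here $M=A+I$, $q=-\mathbf{e}$ ($I$ identity, $\mathbf{e}$ all-ones vector). $\mathrm{LCP}(M,q)$ is w-unique if the vector $Mx+q$ is the same for all solutions $x$. A graph is well-covered if all its maximal independent sets have the same cardinality. *)

From HB Require Import structures.
From mathcomp Require Import all_boot all_order all_algebra.
From mathcomp Require Import reals.
Set Implicit Arguments. Unset Strict Implicit. Unset Printing Implicit Defensive.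
Import Order.TTheory GRing.Theory Num.Theory.
Local Open Scope ring_scope.

Definition simple_graph (n : nat) (adj : rel 'I_n) : Prop :=
  (forall i, ~~ adj i i) /\ (forall i j, adj i j = adj j i).

Definition adjmx (R : realType) (n : nat) (adj : rel 'I_n) : 'M[R]_n :=
  \matrix_(i, j) (adj i j)%:R.

Definition ones (R : realType) (n : nat) : 'cV[R]_n := const_mx 1.

Definition LCP_sol (R : realType) (n : nat) (M : 'M[R]_n) (q x : 'cV[R]_n) : Prop :=
  (forall i, 0 <= x i 0) /\ (forall i, 0 <= (M *m x + q) i 0) /\
  (x^T *m (M *m x + q)) 0 0 = 0.

Definition w_unique (R : realType) (n : nat) (M : 'M[R]_n) (q : 'cV[R]_n) : Prop :=
  forall x y, LCP_sol M q x -> LCP_sol M q y -> M *m x + q = M *m y + q.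

Definition independent (n : nat) (adj : rel 'I_n) (S : {set 'I_n}) : Prop :=
  forall i j, i \in S -> j \in S -> ~~ adj i j.

Definition maximal_independent (n : nat) (adj : rel 'I_n) (S : {set 'I_n}) : Prop :=
  independent adj S /\
  (forall T : {set 'I_n}, independent adj T -> S \subset T -> T = S).

Definition well_covered (n : nat) (adj : rel 'I_n) : Prop :=
  forall S T : {set 'I_n}, maximal_independent adj S -> maximal_independent adj T ->
    #|S| = #|T|.

(** For a symmetric [M], two solutions [x], [y] of [LCP(M, q)] sharing the same
    [w = Mx + q = My + q] satisfy [x^T M y = -x^T q] and [y^T M x = -y^T q]
    by complementarity, so symmetry forces [q^T x = q^T y]; for [q = -e] this
    is [e^T x = e^T y].  The indicator vector of a maximal independent set [S]
    solves [LCP(A + I, -e)]: [w] vanishes on [S] by independence and is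
    nonnegative off [S] because [S] is dominating, and [e^T x = #|S|]. *)
From HB Require Import structures.
From mathcomp Require Import all_boot all_order all_algebra.
From mathcomp Require Import reals.
Import Order.TTheory GRing.Theory Num.Theory.
Local Open Scope ring_scope.

Lemma vdotC {R : comPzRingType} {n : nat} (u v : 'cV[R]_n) :
  (u^T *m v) 0 0 = (v^T *m u) 0 0.
Proof. by rewrite -[v^T *m u]trmxK trmx_mul trmxK [RHS]mxE. Qed.

Lemma vdot_sym_mx {R : comPzRingType} {n : nat} (M : 'M[R]_n) (u v : 'cV[R]_n) :
  M^T = M -> (u^T *m (M *m v)) 0 0 = (v^T *m (M *m u)) 0 0.
Proof. by move=> symM; rewrite vdotC trmx_mul mulmxA symM. Qed.

Lemma LCP_sol_dot_const {R : realType} {n : nat} {M : 'M[R]_n} {q x y : 'cV[R]_n} :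
  M^T = M -> w_unique M q -> LCP_sol M q x -> LCP_sol M q y ->
  q^T *m x = q^T *m y.
Proof.
move=> symM wuniq solx soly; have w_xy := wuniq x y solx soly.
case: solx => _ [_ compl_x]; case: soly => _ [_ compl_y].
have dot_split (u v : 'cV[R]_n) : (u^T *m (M *m v + q)) 0 0 = 0 ->
    (u^T *m (M *m v)) 0 0 = - (q^T *m u) 0 0.
  rewrite mulmxDr [X in X = 0 -> _]mxE (vdotC u q).
  by move=> /eqP; rewrite addr_eq0 => /eqP.
apply/rowP=> j; rewrite [j]ord1; apply: oppr_inj.
rewrite -(dot_split x y) -?w_xy //.
by rewrite -(dot_split y x) ?w_xy // vdot_sym_mx.
Qed.

Lemma adjmx_tr (R : realType) {n : nat} {adj : rel 'I_n} :
  (forall i j, adj i j = adj j i) -> (adjmx R adj)^T = adjmx R adj.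
Proof. by move=> adjC; apply/matrixP=> i j; rewrite !mxE adjC. Qed.

Definition indic_mx (R : realType) {n : nat} (S : {set 'I_n}) : 'cV[R]_n :=
  \col_i (i \in S)%:R.

Lemma ones_tr_mul_indic (R : realType) {n : nat} (S : {set 'I_n}) :
  ((ones R n)^T *m indic_mx R S) 0 0 = #|S|%:R.
Proof.
rewrite mxE (bigID (mem S)) /= [X in _ + X]big1 => [|i /negbTE iNS]; last first.
  by rewrite !mxE iNS mulr0.
rewrite addr0 -sum1_card natr_sum; apply: eq_bigr => i iS.
by rewrite !mxE iS mulr1.
Qed.

Lemma maximal_independent_dominating {n : nat} {adj : rel 'I_n}
    {S : {set 'I_n}} {i : 'I_n} :
  simple_graph adj -> maximal_independent adj S -> i \notin S ->
  exists2 j, j \in S & adj i j.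
Proof.
move=> [adj_irr adjC] [indS maxS] iNS.
have [/exists_inP //|/exists_inP noadj] := boolP [exists j in S, adj i j].
have indiS : independent adj (i |: S).
  move=> a b; rewrite !in_setU1 => /predU1P[-> | aS] /predU1P[-> | bS].
  - exact: adj_irr.
  - by apply/negP=> iab; apply: noadj; exists b.
  - by apply/negP=> abi; apply: noadj; exists a; rewrite // adjC.
  - exact: indS.
by case/negP: iNS; rewrite -(maxS _ indiS (subsetUr _ _)) setU11.
Qed.

Lemma indic_LCP_sol (R : realType) {n : nat} {adj : rel 'I_n} {S : {set 'I_n}} :
  simple_graph adj -> maximal_independent adj S ->
  LCP_sol (adjmx R adj + 1%:M) (- ones R n) (indic_mx R S).
Proof.
move=> graph maxS; have [indS _] := maxS; rewrite /LCP_sol.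
set w := (adjmx R adj + 1%:M) *m indic_mx R S - ones R n.
have wE i : w i 0 = \sum_(j in S) (adj i j)%:R + (i \in S)%:R - 1.
  rewrite /w mulmxDl mul1mx !mxE [in RHS]big_mkcond /=; congr (_ + _ - _).
  by apply: eq_bigr => j _; rewrite !mxE; case: (j \in S); rewrite ?mulr1 ?mulr0.
have w_S i : i \in S -> w i 0 = 0.
  move=> iS; rewrite wE iS big1 ?add0r ?subrr // => j jS.
  by rewrite (negbTE (indS _ _ iS jS)).
split; first by move=> i; rewrite mxE ler0n.
split.
  move=> i; have [iS|iNS] := boolP (i \in S); first by rewrite w_S.
  have [j jS aij] := maximal_independent_dominating graph maxS iNS.
  rewrite wE (negbTE iNS) addr0 subr_ge0 (bigD1 j) //= aij ler_wpDr //.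
  by apply: sumr_ge0 => k _; rewrite ler0n.
rewrite mxE big1 // => i _; have [/w_S->|/negbTE iNS] := boolP (i \in S).
  by rewrite mulr0.
by rewrite !mxE iNS mul0r.
Qed.

Theorem lemma8 (R : realType) (n : nat) (adj : rel 'I_n) :
  simple_graph adj ->
  w_unique (adjmx R adj + 1%:M) (- ones R n) ->
  (forall x y : 'cV[R]_n,
      LCP_sol (adjmx R adj + 1%:M) (- ones R n) x ->
      LCP_sol (adjmx R adj + 1%:M) (- ones R n) y ->
      ((ones R n)^T *m x) 0 0 = ((ones R n)^T *m y) 0 0)
  /\ well_covered adj.
Proof.
move=> graph wuniq.
have symM : (adjmx R adj + 1%:M)^T = adjmx R adj + 1%:M.
  by rewrite linearD /= tr_scalar_mx adjmx_tr //; case: graph.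
have sum_const x y : LCP_sol (adjmx R adj + 1%:M) (- ones R n) x ->
    LCP_sol (adjmx R adj + 1%:M) (- ones R n) y ->
    ((ones R n)^T *m x) 0 0 = ((ones R n)^T *m y) 0 0.
  move=> solx soly; have := LCP_sol_dot_const symM wuniq solx soly.
  by rewrite linearN /= !mulNmx => /oppr_inj ->.
split=> // S T maxS maxT; apply/eqP; rewrite -(eqr_nat R) -!ones_tr_mul_indic.
by rewrite (sum_const _ _ (indic_LCP_sol R graph maxS) (indic_LCP_sol R graph maxT)).
Qed.
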